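(* Let $\mathcal C$ be a category and $n\ge0$. Every isomorphism in $Z^n(\mathcal C)$ is a degeneracy map.
   Context: Notation: for $n\ge 0$, $[n]$ denotes $\{0,\dots,n-1\}$; $\Delta_+$ is the category of these finite total orders and order-preserving maps. For monotone $\varphi:[n]\to[m]$ define $\hat\varphi:[m+1]\to[n+1]$ by $\hat\varphi(i)=\min(\{j\in[n]:\varphi(j)\ge i\}\cup\{n\})$. Zigzags: in a category $\mathcal C$, a zigzag $X$ of length $n$ is a diagram $X(r_0)\xrightarrow{x_0} X(s_0)\xleftarrow{x'_0} X(r_1)\to\cdots\xrightarrow{x_{n-1}} X(s_{n-1})\xleftarrow{x'_{n-1}} X(r_n)$. A zigzag map $f:X\to Y$ (lengths $n$, $m$) consists of a monotone $f_s:[n]\to[m]$, regular slices $f(r_i):X(r_{\hat{f_s}(i)})\to Y(r_i)$ for $0\le i\le m$ and singular slices $f(s_j):X(s_j)\to Y(s_{f_s(j)})$ for $0\le j<n$, such that for each $0\le i<m$: if $f_s^{-1}(i)\neq\emptyset$ with least element $p$, greatest $q$, then $f(s_p)\circ x_p=y_i\circ f(r_i)$, $f(s_q)\circ x'_q=y'_i\circ f(r_{i+1})$, $f(s_j)\circ x'_j=f(s_{j+1})\circ x_{j+1}$ for $p\le j<q$; if $f_s^{-1}(i)=\emptyset$ then $y_i\circ f(r_i)=y'_i\circ f(r_{i+1})$. Composition: $(g\circ f)_s=g_s\circ f_s$, $(g\circ f)(s_j)=g(s_{f_s(j)})\circ f(s_j)$, $(g\circ f)(r_i)=g(r_i)\circ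 f(r_{\hat{g_s}(i)})$. This gives a category $Z(\mathcal C)$; $Z^0(\mathcal C)=\mathcal C$, $Z^n(\mathcal C)=Z(Z^{n-1}(\mathcal C))$. $\pi:Z(\mathcal C)\to\Delta_+$ sends a zigzag of length $n$ to $[n]$ and $f$ to $f_s$; $f$ is $\pi$-vertical if $\pi(f)$ is an identity; $f:x\to y$ is $\pi$-cocartesian if for every $h:x\to y'$ and $u:\pi(y)\to\pi(y')$ with $u\circ\pi(f)=\pi(h)$ there is a unique $v:y\to y'$ with $v\circ f=h$, $\pi(v)=u$. Degeneracy maps in $Z^n(\mathcal C)$ (by induction on $n$): in $Z^0(\mathcal C)$ the isomorphisms; for $n\ge1$ the maps generated under composition by simple degeneracy maps (the $\pi$-cocartesian maps $f$ with $\pi(f)$ a monomorphism of $\Delta_+$) and parallel degeneracy maps (the $\pi$-vertical maps whose regular and singular slices are all degeneracy maps in $Z^{n-1}(\mathcal C)$). *)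

(* Categories are presented in the single-sorted
   style: a type of objects, a type of arrows, dom/cod, identities, and a
   total composition operation that is only meaningful on composable pairs;
   predicates [isObj]/[isArr] carve out the actual objects/arrows. *)
From mathcomp Require Import all_boot.
Set Implicit Arguments. Unset Strict Implicit. Unset Printing Implicit Defensive.

Record Cat := {
  Obj : Type;
  Arr : Type;
  isObj : Obj -> Prop;
  isArr : Arr -> Prop;
  dom : Arr -> Obj;
  cod : Arr -> Obj;
  idt : Obj -> Arr;
  comp : Arr -> Arr -> Arr  (* comp g f = g \o f *)
}.
Arguments isObj c _ : clear implicits.
Arguments isArr c _ : clear implicits.
Arguments dom c _ : clear implicits.
Arguments cod c _ : clear implicits.
Arguments idt c _ : clear implicits.
Arguments comp c _ _ : clear implicits.

Definition is_category (C : Cat) : Prop :=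
  (forall x, isObj C x ->
     isArr C (idt C x) /\ dom C (idt C x) = x /\ cod C (idt C x) = x) /\
  (forall f, isArr C f -> isObj C (dom C f) /\ isObj C (cod C f)) /\
  (forall f g, isArr C f -> isArr C g -> cod C f = dom C g ->
     isArr C (comp C g f) /\ dom C (comp C g f) = dom C f /\
     cod C (comp C g f) = cod C g) /\
  (forall f, isArr C f ->
     comp C f (idt C (dom C f)) = f /\ comp C (idt C (cod C f)) f = f) /\
  (forall f g h, isArr C f -> isArr C g -> isArr C h ->
     cod C f = dom C g -> cod C g = dom C h ->
     comp C h (comp C g f) = comp C (comp C h g) f).

Definition is_iso (C : Cat) (f : Arr C) : Prop :=
  isArr C f /\ exists g : Arr C, isArr C g /\ dom C g = cod C f /\ cod C g = dom C f /\
    comp C g f = idt C (dom C f) /\ comp C f g = idt C (cod C f).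

Arguments is_iso C f : clear implicits.

Definition nthf (A : Type) (k : nat) (h : 'I_k -> A) (d : A) (x : nat) : A :=
  match @insub nat (fun x => x < k) _ x with Some i => h i | None => d end.

(* Monotone maps [n] -> [m] of Delta_+ are represented as h : 'I_n -> nat. *)
Definition monmap (n m : nat) (h : 'I_n -> nat) : Prop :=
  (forall j, h j < m) /\ (forall j k : 'I_n, j <= k -> h j <= h k).

(* hat phi (i) = min ({j in [n] | phi j >= i} U {n}) *)
Definition hat (n : nat) (h : 'I_n -> nat) (i : nat) : nat :=
  find (fun j => i <= nthf h 0 j) (iota 0 n).

Definition mono_Delta (n m : nat) (h : 'I_n -> nat) : Prop :=
  forall k (a b : 'I_k -> nat), monmap n a -> monmap n b ->
    (forall t, nthf h 0 (a t) = nthf h 0 (b t)) -> forall t, a t = b t.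

Section Zigzag.
Variable C : Cat.

(* A zigzag X(r_0) -x_0-> X(s_0) <-x'_0- X(r_1) -> ... <- X(r_n). *)
Record zz := {
  zlen : nat;
  zr : 'I_zlen.+1 -> Obj C;
  zs : 'I_zlen -> Obj C;
  zx : 'I_zlen -> Arr C;
  zx' : 'I_zlen -> Arr C
}.

Local Arguments zr z _ : clear implicits.
Local Arguments zs z _ : clear implicits.
Local Arguments zx z _ : clear implicits.
Local Arguments zx' z _ : clear implicits.

Definition zz_valid (X : zz) : Prop :=
  (forall i, isObj C (zr X i)) /\ (forall j, isObj C (zs X j)) /\
  (forall j : 'I_(zlen X),
     isArr C (zx X j) /\ isArr C (zx' X j) /\
     dom C (zx X j) = zr X (widen_ord (leqnSn _) j) /\ cod C (zx X j) = zs X j /\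
     dom C (zx' X j) = zr X (lift ord0 j) /\ cod C (zx' X j) = zs X j).

(* Raw zigzag map data: f_s, regular slices f(r_i), singular slices f(s_j). *)
Record zmap := {
  zsrc : zz;
  ztgt : zz;
  zfs : 'I_(zlen zsrc) -> nat;
  zfr : 'I_(zlen ztgt).+1 -> Arr C;
  zfsing : 'I_(zlen zsrc) -> Arr C
}.

Local Arguments zfs z _ : clear implicits.
Local Arguments zfr z _ : clear implicits.
Local Arguments zfsing z _ : clear implicits.

Definition zmap_valid (f : zmap) : Prop :=
  let X := zsrc f in let Y := ztgt f in
  let n := zlen X in let m := zlen Y in
  let d := zfr f ord0 in
  zz_valid X /\ zz_valid Y /\ monmap m (zfs f) /\
  (forall i : 'I_m.+1, isArr C (zfr f i) /\
     dom C (zfr f i) = nthf (zr X) (zr X ord0) (hat (zfs f) i) /\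
     cod C (zfr f i) = zr Y i) /\
  (forall j : 'I_n, isArr C (zfsing f j) /\
     dom C (zfsing f j) = zs X j /\
     cod C (zfsing f j) = nthf (zs Y) (zr Y ord0) (zfs f j)) /\
  (forall i : 'I_m,
     ((forall j : 'I_n, zfs f j <> i) ->
        comp C (zx Y i) (zfr f (widen_ord (leqnSn _) i)) =
        comp C (zx' Y i) (zfr f (lift ord0 i))) /\
     (forall p q : 'I_n, zfs f p = i -> zfs f q = i ->
        (forall j : 'I_n, zfs f j = i -> p <= j <= q) ->
        comp C (zfsing f p) (zx X p) = comp C (zx Y i) (zfr f (widen_ord (leqnSn _) i)) /\
        comp C (zfsing f q) (zx' X q) = comp C (zx' Y i) (zfr f (lift ord0 i)) /\
        (forall j : nat, p <= j < q ->
           comp C (nthf (zfsing f) d j) (nthf (zx' X) d j) =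
           comp C (nthf (zfsing f) d j.+1) (nthf (zx X) d j.+1)))).

Definition zid (X : zz) : zmap :=
  {| zsrc := X; ztgt := X; zfs := fun j => val j;
     zfr := fun i => idt C (zr X i); zfsing := fun j => idt C (zs X j) |}.

Definition zcomp (g f : zmap) : zmap :=
  {| zsrc := zsrc f; ztgt := ztgt g;
     zfs := fun j => nthf (zfs g) 0 (zfs f j);
     zfr := fun i => comp C (zfr g i)
                       (nthf (zfr f) (zfr f ord0) (hat (zfs g) i));
     zfsing := fun j => comp C (nthf (zfsing g) (zfr g ord0) (zfs f j))
                              (zfsing f j) |}.

End Zigzag.
Arguments zr {C} z _.
Arguments zs {C} z _.
Arguments zx {C} z _.
Arguments zx' {C} z _.
Arguments zfs {C} z _.
Arguments zfr {C} z _.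
Arguments zfsing {C} z _.

Definition Z (C : Cat) : Cat :=
  {| Obj := zz C; Arr := zmap C; isObj := @zz_valid C; isArr := @zmap_valid C;
     dom := @zsrc C; cod := @ztgt C; idt := @zid C; comp := @zcomp C |}.

Fixpoint Zn (n : nat) (C : Cat) : Cat :=
  match n with 0 => C | k.+1 => Z (Zn k C) end.

Section Degeneracy.
Variable C : Cat.
Local Notation ZC := (Z C).

(* pi : Z(C) -> Delta_+ ; f is pi-vertical if pi(f) is an identity *)
Definition pi_vertical (f : zmap C) : Prop :=
  zlen (zsrc f) = zlen (ztgt f) /\ forall j, zfs f j = val j.

Definition pi_cocartesian (f : zmap C) : Prop :=
  forall (h : zmap C) (u : 'I_(zlen (ztgt f)) -> nat),
    zmap_valid h -> zsrc h = zsrc f ->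
    monmap (zlen (ztgt h)) u ->
    (forall j : 'I_(zlen (zsrc f)), nthf u 0 (zfs f j) = nthf (zfs h) 0 j) ->
    exists! v : zmap C, zmap_valid v /\ zsrc v = ztgt f /\ ztgt v = ztgt h /\
      zcomp v f = h /\ (forall i : 'I_(zlen (ztgt f)), nthf (zfs v) 0 i = u i).

Definition simple_degeneracy (f : zmap C) : Prop :=
  zmap_valid f /\ pi_cocartesian f /\ mono_Delta (zlen (ztgt f)) (zfs f).

Definition parallel_degeneracy (deg : Arr C -> Prop) (f : zmap C) : Prop :=
  zmap_valid f /\ pi_vertical f /\
  (forall i, deg (zfr f i)) /\ (forall j, deg (zfsing f j)).

Inductive comp_closure (G : zmap C -> Prop) : zmap C -> Prop :=
  | cc_gen f : G f -> comp_closure G f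
  | cc_comp f g : comp_closure G f -> comp_closure G g ->
      zsrc g = ztgt f -> comp_closure G (zcomp g f).

End Degeneracy.

Fixpoint degeneracy (C : Cat) (n : nat) : Arr (Zn n C) -> Prop :=
  match n return Arr (Zn n C) -> Prop with
  | 0 => fun f => is_iso (Zn 0 C) f
  | k.+1 => fun f => comp_closure
      (fun g => simple_degeneracy g \/
                parallel_degeneracy (@degeneracy C k) g) f
  end.
Arguments degeneracy C n f : clear implicits.

(* An isomorphism of Z(D) is sent by pi to an isomorphism of Delta_+, i.e. to
   an identity, so it is pi-vertical.  Composing it with its inverse slice by
   slice then shows that its regular and singular slices are isomorphisms of D.
   By induction on n these slices are degeneracy maps of Z^(n-1)(C), hence an
   isomorphism of Z^n(C) is a parallel degeneracy map. *)

From mathcomp Require Import all_boot.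
Set Implicit Arguments. Unset Strict Implicit. Unset Printing Implicit Defensive.

Lemma nthf_ord A k (h : 'I_k -> A) d (j : 'I_k) : nthf h d j = h j.
Proof. by rewrite /nthf valK. Qed.

Lemma nthf_lt A k (h : 'I_k -> A) d j (lt_jk : j < k) :
  nthf h d j = h (Ordinal lt_jk).
Proof. exact: (nthf_ord h d (Ordinal lt_jk)). Qed.

Lemma nthf_comp A B k (F : A -> B) (h : 'I_k -> A) d x :
  nthf (F \o h) (F d) x = F (nthf h d x).
Proof. by rewrite /nthf; case: insub. Qed.

Section MonmapSection.
Variables (n m : nat) (h : 'I_n -> nat) (h' : 'I_m -> nat).
Hypotheses (mon_h : monmap m h) (h'K : forall j, nthf h' 0 (h j) = j).

Lemma monmap_section_strict (j k : 'I_n) : j < k -> h j < h k.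
Proof.
move=> lt_jk; rewrite ltn_neqAle (proj2 mon_h) ?(ltnW lt_jk) // andbT.
by apply: contraTneq lt_jk => /(congr1 (nthf h' 0)); rewrite !h'K => ->; rewrite ltnn.
Qed.

Lemma monmap_section_ge (j : 'I_n) : j <= h j.
Proof.
case: j => j lt_jn /=; elim: j lt_jn => // j IHj lt_jn.
apply: leq_ltn_trans (IHj (ltnW lt_jn)) _.
exact: (monmap_section_strict (j := Ordinal (ltnW lt_jn)) (k := Ordinal lt_jn)).
Qed.

Lemma monmap_section_leq : n <= m.
Proof.
rewrite leqNgt; apply/negP => lt_mn.
by have := monmap_section_ge (Ordinal lt_mn); rewrite leqNgt (proj1 mon_h).
Qed.

End MonmapSection.

Lemma monmap_iso_id n m (h : 'I_n -> nat) (h' : 'I_m -> nat) :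
  monmap m h -> monmap n h' ->
  (forall j, nthf h' 0 (h j) = j) -> (forall j, nthf h 0 (h' j) = j) ->
  n = m /\ forall j, h j = j.
Proof.
move=> mon_h mon_h' h'K hK; split.
  by apply/eqP; rewrite eqn_leq (monmap_section_leq mon_h h'K) (monmap_section_leq mon_h' hK).
move=> j; apply/eqP; rewrite eqn_leq (monmap_section_ge mon_h h'K) andbT.
have := monmap_section_ge mon_h' hK (Ordinal (proj1 mon_h j)).
by rewrite /= -(nthf_lt h' 0) h'K.
Qed.

Lemma hat_id n (h : 'I_n -> nat) : (forall j, h j = j) ->
  forall i, i <= n -> hat h i = i.
Proof.
move=> hE i le_in; rewrite /hat -[in iota 0 n](subnKC le_in) iotaD find_cat size_iota.
have -> : has (fun j => i <= nthf h 0 j) (iota 0 i) = false.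
  apply/hasPn => j; rewrite mem_iota /= => lt_ji.
  by rewrite (nthf_lt h 0 (leq_trans lt_ji le_in)) hE /= -ltnNge.
case En: (n - i) => [|k] /=; first by rewrite addn0.
have lt_in : i < n by rewrite -subn_gt0 En.
by rewrite add0n (nthf_lt h 0 lt_in) hE leqnn addn0.
Qed.

Section ZigzagIso.
Variable D : Cat.
Implicit Types (X : zz D) (f g h : zmap D).

Definition zinverse g f :=
  zsrc g = ztgt f /\ ztgt g = zsrc f /\
  zcomp g f = zid (zsrc f) /\ zcomp f g = zid (ztgt f).

Lemma zinverse_sym g f : zinverse g f -> zinverse f g.
Proof. by case=> eg [eg' [gf fg]]; rewrite /zinverse eg eg'. Qed.

(* Objects and slices indexed by nat rather than by ordinals, so that zigzags
   whose lengths are only provably equal can be compared; out of range they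
   take the junk value at index 0. *)
Definition robj X i := nthf (zr X) (zr X ord0) i.
Definition sobj X j := nthf (zs X) (zr X ord0) j.
Definition rslice h i := nthf (zfr h) (zfr h ord0) i.
Definition sslice h j := nthf (zfsing h) (zfr h ord0) j.

Lemma zinverse_vertical g f :
  zmap_valid f -> zmap_valid g -> zinverse g f -> pi_vertical f.
Proof.
case: g => Y X gs gr gsing vf [_ [_ [mon_g _]]] [/= eY [eX [gf fg]]]; subst X Y.
case: vf => _ [_ [mon_f _]].
have zfsK h1 h2 : zcomp h1 h2 = zid (zsrc h2) -> forall j, nthf (zfs h1) 0 (zfs h2 j) = j.
  by move=> E j; have := congr1 (fun h => nthf (zfs h) 0 j) E; rewrite /= !nthf_ord.
exact: monmap_iso_id mon_f mon_g (zfsK _ _ gf) (zfsK _ _ fg).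
Qed.

Lemma rslice_zid X i : rslice (zid X) i = idt D (robj X i).
Proof. exact: (nthf_comp (idt D)). Qed.

Lemma sslice_zid X j : sslice (zid X) j = idt D (sobj X j).
Proof. exact: (nthf_comp (idt D)). Qed.

Lemma rslice_zcomp_vertical g f i : pi_vertical g -> i <= zlen (ztgt g) ->
  rslice (zcomp g f) i = comp D (rslice g i) (rslice f i).
Proof.
case=> eq_len gsE le_i; have lt_i : i < (zlen (ztgt g)).+1 := le_i.
by rewrite /rslice !(nthf_lt _ _ lt_i) /= hat_id ?eq_len.
Qed.

Lemma sslice_zcomp_vertical g f j : pi_vertical f -> j < zlen (zsrc f) ->
  sslice (zcomp g f) j = comp D (sslice g j) (sslice f j).
Proof.
by case=> _ fsE lt_j; rewrite /sslice !(nthf_lt _ _ lt_j) /= fsE.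
Qed.

Lemma rslice_valid h i : zmap_valid h -> pi_vertical h -> i <= zlen (ztgt h) ->
  [/\ isArr D (rslice h i), dom D (rslice h i) = robj (zsrc h) i
    & cod D (rslice h i) = robj (ztgt h) i].
Proof.
case=> _ [_ [_ [valid_r _]]] [eq_len hsE] le_i.
have lt_i : i < (zlen (ztgt h)).+1 := le_i.
have [arr_r [dom_r cod_r]] := valid_r (Ordinal lt_i).
by rewrite /rslice /robj !(nthf_lt _ _ lt_i) dom_r cod_r hat_id ?eq_len.
Qed.

Lemma sslice_valid h j : zmap_valid h -> pi_vertical h -> j < zlen (zsrc h) ->
  [/\ isArr D (sslice h j), dom D (sslice h j) = sobj (zsrc h) j
    & cod D (sslice h j) = sobj (ztgt h) j].
Proof.
case=> _ [_ [_ [_ [valid_s _]]]] [_ hsE] lt_j.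
have [arr_s [dom_s cod_s]] := valid_s (Ordinal lt_j).
by rewrite /sslice /sobj !(nthf_lt _ _ lt_j) dom_s cod_s hsE.
Qed.

Lemma zinverse_rslice_iso g f i : zmap_valid f -> zmap_valid g ->
  zinverse g f -> i <= zlen (ztgt f) -> is_iso D (rslice f i).
Proof.
move=> valid_f valid_g inv le_i.
have vert_f := zinverse_vertical valid_f valid_g inv.
have vert_g := zinverse_vertical valid_g valid_f (zinverse_sym inv).
case: inv => eg [eg' [gf fg]].
have le_ig : i <= zlen (ztgt g) by rewrite eg' (proj1 vert_f).
have [arr_f dom_f cod_f] := rslice_valid valid_f vert_f le_i.
have [arr_g dom_g cod_g] := rslice_valid valid_g vert_g le_ig.
split=> //; exists (rslice g i); rewrite dom_f cod_f dom_g cod_g eg eg'.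
by rewrite -!rslice_zcomp_vertical // gf fg !rslice_zid.
Qed.

Lemma zinverse_sslice_iso g f j : zmap_valid f -> zmap_valid g ->
  zinverse g f -> j < zlen (zsrc f) -> is_iso D (sslice f j).
Proof.
move=> valid_f valid_g inv lt_j.
have vert_f := zinverse_vertical valid_f valid_g inv.
have vert_g := zinverse_vertical valid_g valid_f (zinverse_sym inv).
case: inv => eg [eg' [gf fg]].
have lt_jg : j < zlen (zsrc g) by rewrite eg -(proj1 vert_f).
have [arr_f dom_f cod_f] := sslice_valid valid_f vert_f lt_j.
have [arr_g dom_g cod_g] := sslice_valid valid_g vert_g lt_jg.
split=> //; exists (sslice g j); rewrite dom_f cod_f dom_g cod_g eg eg'.
by rewrite -!sslice_zcomp_vertical // gf fg !sslice_zid.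
Qed.

Lemma iso_Z_parallel_degeneracy (deg : Arr D -> Prop) f :
  (forall a, is_iso D a -> deg a) -> is_iso (Z D) f -> parallel_degeneracy deg f.
Proof.
move=> iso_deg [valid_f [g [valid_g inv]]].
split=> //; split; first exact: zinverse_vertical inv.
split=> [i|j]; rewrite -(nthf_ord _ (zfr f ord0)); apply: iso_deg.
- exact: zinverse_rslice_iso inv (ltn_ord i).
- exact: zinverse_sslice_iso inv (ltn_ord j).
Qed.

End ZigzagIso.

Theorem lemma3p4 (C : Cat) (n : nat) (f : Arr (Zn n C)) :
  is_category C -> is_iso (Zn n C) f -> degeneracy C n f.
Proof.
move=> _; elim: n f => [|n IHn] f iso_f //=.
by apply: cc_gen; right; apply: iso_Z_parallel_degeneracy.
Qed.
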